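(* Let $\{f_t\}_{t\in[0,\varepsilon]}$ be a Misiurewicz-rooted unimodal family on $I=[-1,1]$. There exists $\theta_0>0$ such that for every $\theta\in(0,\theta_0)$ and every sufficiently small $t$ the following holds. Let $U_0,U_1$ be open intervals with $0\in U_1\subset U_0\subset(-\theta,\theta)$, such that for $j=0,1$, $f_t(\partial U_j)$ is a single point preperiodic for $f_t$, $f_t^k(\partial U_j)\notin U_0$ for all $k\ge1$, and $|U_1|\le\theta\,\mathrm{dist}(U_1,\partial U_0)$. Suppose that either $0$ never returns to $U_0$ under $f_t$, or the first return of $0$ to $U_0$ lies in $U_1$. Let $\phi_1$ be the first return map of $f_t$ to $U_1$ and let $W$ be a non-central branch of $\phi_1$, with $\phi_1=f_t^n$ on $W$. Then there is an open interval $\hat W$ with $W\subset\hat W\subset U_1$ mapped diffeomorphically by $f_t^n$ onto $U_0$; if $\phi_1$ has a central branch, $\hat W$ is disjoint from it; and $|D\phi_1|\ge5$ on the non-central branches.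
   Context: The first return time to $U_1$ is $r(x)=\inf\{k\ge1\colon f_t^k(x)\in U_1\}$ and $\phi_1(x)=f_t^{r(x)}(x)$; a branch of $\phi_1$ is a maximal open interval on which $r$ is constant (and finite); a branch containing $0$ is called central. A map $f\colon I\to I$ is S-unimodal with critical point $0$ if it is $C^2$, $0$ is its unique turning point and unique point with $f'=0$, $|f'|^{-1/2}$ is convex on each component of $I\setminus\{0\}$, $f(\partial I)\subset\partial I$ and $|f'|>1$ on $\partial I$; non-degenerate if $f''(0)\ne0$. A Misiurewicz-rooted unimodal family is a family $\{f_t\}_{t\in[0,\varepsilon]}$ of non-degenerate S-unimodal maps of $I$ with critical point $0$, with $f_0$ Misiurewicz (the closure of $\{f_0^n(f_0(0))\}_{n\ge0}$ is compact forward-invariant with $|(f_0^k)'|\ge2$ on it for some $k$), and $(x,t)\mapsto f_t(x)$ of class $C^2$. *)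

From Stdlib Require Import Reals.
From Coquelicot Require Import Coquelicot.
Open Scope R_scope.

Definition iter (n : nat) (g : R -> R) (x : R) : R := Nat.iter n g x.

Definition d_x (F : R -> R -> R) : R -> R -> R := fun t x => Derive (fun y => F t y) x.
Definition d_t (F : R -> R -> R) : R -> R -> R := fun t x => Derive (fun s => F s x) t.

Definition C1_2d (F : R -> R -> R) : Prop :=
  (forall t x, ex_derive (fun y => F t y) x /\ ex_derive (fun s => F s x) t) /\
  (forall t x, continuity_2d_pt F t x /\ continuity_2d_pt (d_x F) t x
               /\ continuity_2d_pt (d_t F) t x).

Definition C2_2d (F : R -> R -> R) : Prop :=
  C1_2d F /\ C1_2d (d_x F) /\ C1_2d (d_t F).

Definition inI (x : R) : Prop := -1 <= x <= 1.

Definition convex_on (g : R -> R) (P : R -> Prop) : Prop :=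
  forall x y l, P x -> P y -> 0 <= l <= 1 ->
    g (l * x + (1 - l) * y) <= l * g x + (1 - l) * g y.

Definition S_unimodal (f : R -> R) : Prop :=
  (forall x, inI x -> inI (f x)) /\
  (forall x, ex_derive f x /\ ex_derive (Derive f) x) /\
  (forall x, continuous (Derive_n f 2) x) /\
  ((forall x y, -1 <= x -> x < y -> y <= 0 -> f x < f y) /\
   (forall x y, 0 <= x -> x < y -> y <= 1 -> f y < f x)
   \/
   (forall x y, -1 <= x -> x < y -> y <= 0 -> f y < f x) /\
   (forall x y, 0 <= x -> x < y -> y <= 1 -> f x < f y)) /\
  (forall x, inI x -> (Derive f x = 0 <-> x = 0)) /\
  convex_on (fun x => / sqrt (Rabs (Derive f x))) (fun x => -1 <= x < 0) /\
  convex_on (fun x => / sqrt (Rabs (Derive f x))) (fun x => 0 < x <= 1) /\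
  (f (-1) = -1 \/ f (-1) = 1) /\ (f 1 = -1 \/ f 1 = 1) /\
  Rabs (Derive f (-1)) > 1 /\ Rabs (Derive f 1) > 1.

Definition non_degenerate (f : R -> R) : Prop := Derive_n f 2 0 <> 0.

Definition in_postcrit_closure (f : R -> R) (x : R) : Prop :=
  forall e, e > 0 -> exists n : nat, Rabs (iter n f (f 0) - x) < e.

Definition Misiurewicz (f : R -> R) : Prop :=
  exists k : nat, forall x, in_postcrit_closure f x ->
    Rabs (Derive (iter k f) x) >= 2.

Definition MR_family (f : R -> R -> R) (eps : R) : Prop :=
  0 < eps /\
  C2_2d f /\
  (forall t, 0 <= t <= eps -> S_unimodal (f t) /\ non_degenerate (f t)) /\
  Misiurewicz (f 0).

Definition in_open (a b x : R) : Prop := a < x < b.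

Definition preperiodic (g : R -> R) (y : R) : Prop :=
  exists m p : nat, (p >= 1)%nat /\ iter (m + p) g y = iter m g y.

Definition return_time (g : R -> R) (a1 b1 x : R) (n : nat) : Prop :=
  (n >= 1)%nat /\ in_open a1 b1 (iter n g x) /\
  forall j : nat, (1 <= j < n)%nat -> ~ in_open a1 b1 (iter j g x).

Definition is_branch (g : R -> R) (a1 b1 c d : R) (n : nat) : Prop :=
  a1 <= c /\ c < d /\ d <= b1 /\
  (forall x, in_open c d x -> return_time g a1 b1 x n) /\
  (forall c' d', c' <= c -> d <= d' -> a1 <= c' -> d' <= b1 ->
     (forall x, in_open c' d' x -> return_time g a1 b1 x n) ->
     c' = c /\ d' = d).

Definition central (c d : R) : Prop := c < 0 < d.

From Stdlib Require Import Reals Lra Lia Classical.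
From Coquelicot Require Import Coquelicot.
Open Scope R_scope.

(* The branch [W = (c, d)] of the first return map to [U1] is pulled back to the
   maximal interval [hatW = (ch, dh)] containing [W] that [g = f_t^n] maps into [U0];
   its end points are mapped to the boundary of [U0].  Since the orbits of the
   boundary points of [U1] avoid [U0], no point of [hatW] visits [U1] before time [n]
   (intermediate value theorem), and the assumption on the first return of [0]
   together with the maximality of [W] keeps [0] out of [hatW].  Hence [g] is a
   diffeomorphism from [hatW] onto [U0], and the end points of [hatW] have no return
   time, which separates [hatW] from the central branch.  Finally, [f_t] has negative
   Schwarzian derivative, so [|g'|^(-1/2)] is convex on [hatW] (minimum principle):
   on [W], [|g'|] is at least the slope of [g] on one component of [hatW \ W], which
   is shorter than [U1] and is mapped across a gap between [U1] and the boundary of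
   [U0]; this gives [|g'| >= 1/theta > 5]. *)

(** * Real analysis *)

Lemma is_derive_first_order (g : R -> R) t l : is_derive g t l ->
  forall eta, eta > 0 -> exists delta, delta > 0 /\ forall s, Rabs (s - t) < delta ->
    Rabs (g s - g t - l * (s - t)) <= eta * Rabs (s - t).
Proof.
  intros Hd eta Heta. apply is_derive_Reals in Hd.
  destruct (Hd eta Heta) as [delta Hdelta].
  exists delta. split; [apply cond_pos|].
  intros s Hs. destruct (Req_dec s t) as [->|Hst].
  - replace (g t - g t - l * (t - t)) with 0 by ring.
    rewrite Rminus_diag, Rabs_R0. lra.
  - specialize (Hdelta (s - t) ltac:(lra) Hs).
    replace (t + (s - t)) with s in Hdelta by ring.
    replace (g s - g t - l * (s - t)) with (((g s - g t) / (s - t) - l) * (s - t))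
      by (field; lra).
    rewrite Rabs_mult. apply Rmult_le_compat_r; [apply Rabs_pos | lra].
Qed.

Lemma is_derive_Ropp (g : R -> R) x l : is_derive g x l -> is_derive (fun y => - g y) x (- l).
Proof. exact (@is_derive_opp R_AbsRing R_NormedModule g x l). Qed.

(* [(g (t + h) - g t - K * h) * h <= 0] says that the difference quotient at
   [t] with increment [h] is at most [K], without dividing by [h]. *)
Lemma is_derive_le_of_quotients (g : R -> R) t l K : is_derive g t l ->
  (forall delta, delta > 0 ->
     exists h, h <> 0 /\ Rabs h < delta /\ (g (t + h) - g t - K * h) * h <= 0) ->
  l <= K.
Proof.
  intros Hd Hq. apply Rnot_lt_le; intro HKl.
  apply is_derive_Reals in Hd.
  destruct (Hd (l - K) ltac:(lra)) as [delta Hdelta].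
  destruct (Hq delta (cond_pos delta)) as [h [Hh0 [Hh Hneg]]].
  specialize (Hdelta h Hh0 Hh). apply Rabs_lt_between in Hdelta.
  set (q := (g (t + h) - g t) / h) in Hdelta.
  assert (Hgq : g (t + h) - g t = q * h) by (unfold q; field; lra).
  rewrite Hgq in Hneg.
  assert (0 < h * h) by (apply Rsqr_pos_lt; lra).
  nra.
Qed.

Lemma is_derive_ge0_of_increasing (g : R -> R) p q t l :
  (forall a b, p <= a -> a < b -> b <= q -> g a < g b) -> p < q -> p <= t <= q ->
  is_derive g t l -> 0 <= l.
Proof.
  intros Hinc Hpq Ht Hd.
  enough (- l <= 0) by lra.
  apply (is_derive_le_of_quotients (fun x => - g x) t); [apply is_derive_Ropp, Hd|].
  intros delta Hdelta.
  destruct (Rlt_le_dec t q) as [Htq|Htq].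
  - set (h := Rmin (delta / 2) (q - t)).
    assert (h <= delta / 2) by apply Rmin_l. assert (h <= q - t) by apply Rmin_r.
    assert (0 < h) by (apply Rmin_glb_lt; lra).
    exists h. split; [lra|]. split; [rewrite Rabs_right; lra|].
    assert (g t < g (t + h)) by (apply Hinc; lra). nra.
  - set (h := Rmin (delta / 2) (q - p)).
    assert (h <= delta / 2) by apply Rmin_l. assert (h <= q - p) by apply Rmin_r.
    assert (0 < h) by (apply Rmin_glb_lt; lra).
    exists (- h). split; [lra|]. split; [rewrite Rabs_left; lra|].
    assert (g (t + - h) < g t) by (apply Hinc; lra). nra.
Qed.

Lemma convex_on_chord (g : R -> R) D t x s : convex_on g D -> D t -> D s -> t < x < s ->
  (g x - g t) * (s - t) <= (g s - g t) * (x - t).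
Proof.
  intros Hc Ht Hs Hx.
  set (l := (s - x) / (s - t)).
  assert (Hl : 0 <= l <= 1).
  { unfold l; split.
    - apply Rdiv_le_0_compat; lra.
    - apply (Rmult_le_reg_r (s - t)); [lra|]. field_simplify; lra. }
  specialize (Hc t s l Ht Hs Hl).
  replace (l * t + (1 - l) * s) with x in Hc by (unfold l; field; lra).
  replace (l * g t + (1 - l) * g s) with (g t + (g s - g t) * (x - t) / (s - t))
    in Hc by (unfold l; field; lra).
  apply (Rmult_le_compat_r (s - t)) in Hc; [|lra].
  replace ((g t + (g s - g t) * (x - t) / (s - t)) * (s - t))
    with (g t * (s - t) + (g s - g t) * (x - t)) in Hc by (field; lra).
  lra.
Qed.

Lemma convex_on_is_derive_le (g : R -> R) D t s dt ds : convex_on g D ->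
  (forall z, t <= z <= s -> D z) -> t < s ->
  is_derive g t dt -> is_derive g s ds -> dt <= ds.
Proof.
  intros Hc HD Hts Ht Hs.
  set (S := (g s - g t) / (s - t)).
  assert (HS : g s - g t = S * (s - t)) by (unfold S; field; lra).
  assert (Hchord : forall x, t < x < s -> g x - g t <= S * (x - t)).
  { intros x Hx.
    assert (H := convex_on_chord g D t x s Hc (HD t ltac:(lra)) (HD s ltac:(lra)) Hx).
    rewrite HS in H. apply (Rmult_le_reg_r (s - t)); nra. }
  assert (Hsmall : forall delta, delta > 0 ->
            exists h, 0 < h /\ h < delta /\ h < s - t).
  { intros delta Hdelta. exists (Rmin (delta / 2) ((s - t) / 2)).
    assert (Rmin (delta / 2) ((s - t) / 2) <= delta / 2) by apply Rmin_l.
    assert (Rmin (delta / 2) ((s - t) / 2) <= (s - t) / 2) by apply Rmin_r.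
    assert (0 < Rmin (delta / 2) ((s - t) / 2)) by (apply Rmin_glb_lt; lra).
    lra. }
  assert (dt <= S).
  { apply (is_derive_le_of_quotients g t dt S Ht).
    intros delta Hdelta. destruct (Hsmall delta Hdelta) as [h Hh].
    exists h. split; [lra|]. split; [rewrite Rabs_right; lra|].
    assert (g (t + h) - g t <= S * (t + h - t)) by (apply Hchord; lra). nra. }
  assert (- ds <= - S).
  { apply (is_derive_le_of_quotients (fun x => - g x) s); [apply is_derive_Ropp, Hs|].
    intros delta Hdelta. destruct (Hsmall delta Hdelta) as [h Hh].
    exists (- h). split; [lra|]. split; [rewrite Rabs_left; lra|].
    assert (g (s + - h) - g t <= S * (s + - h - t)) by (apply Hchord; lra). nra. }
  lra.
Qed.

Lemma real_induction (P : R -> Prop) x y : x <= y -> P x ->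
  (forall t, x < t <= y -> (forall r, x <= r < t -> P r) -> P t) ->
  (forall t, x <= t < y -> P t ->
     exists delta, delta > 0 /\ forall r, t < r < t + delta -> P r) ->
  forall t, x <= t <= y -> P t.
Proof.
  intros Hxy Hx Hlim Hsucc.
  set (E := fun s => x <= s <= y /\ forall r, x <= r <= s -> P r).
  assert (HEx : E x) by (split; [lra|]; intros r Hr; replace r with x by lra; exact Hx).
  destruct (completeness E) as [m [Hub Hlub]].
  { exists y. intros s [Hs _]. lra. }
  { exists x. exact HEx. }
  assert (Hxm : x <= m) by (apply Hub, HEx).
  assert (Hmy : m <= y) by (apply Hlub; intros s [Hs _]; lra).
  assert (Hbelow : forall r, x <= r < m -> P r).
  { intros r Hr. apply NNPP; intro HPr.
    assert (m <= r); [|lra].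
    apply Hlub. intros s [Hs HPs]. apply Rnot_lt_le; intro Hrs.
    apply HPr, HPs. lra. }
  assert (HEm : E m).
  { split; [lra|]. intros r Hr.
    destruct (Req_dec r m) as [->|Hrm]; [|apply Hbelow; lra].
    destruct (Req_dec m x) as [->|Hmx]; [exact Hx|].
    apply Hlim; [lra | exact Hbelow]. }
  destruct (Req_dec m y) as [->|Hmy'].
  - intros t Ht. apply (proj2 HEm). exact Ht.
  - exfalso. destruct (Hsucc m ltac:(lra) (proj2 HEm m ltac:(lra))) as [delta [Hdelta Hr]].
    set (m' := Rmin y (m + delta / 2)).
    assert (m' <= y) by apply Rmin_l. assert (m' <= m + delta / 2) by apply Rmin_r.
    assert (m < m') by (apply Rmin_glb_lt; lra).
    assert (E m').
    { split; [lra|]. intros r Hr'.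
      destruct (Rle_lt_dec r m); [apply (proj2 HEm); lra | apply Hr; lra]. }
    assert (m' <= m) by (apply Hub; assumption). lra.
Qed.

Lemma nondecreasing_of_local (phi : R -> R) x y : x <= y ->
  (forall t, x <= t <= y -> forall eps, eps > 0 -> exists delta, delta > 0 /\
     forall s, x <= s <= y -> Rabs (s - t) < delta ->
       (phi s - phi t) * (s - t) >= - eps * (s - t) ^ 2) ->
  phi x <= phi y.
Proof.
  intros Hxy Hloc.
  destruct (Req_dec x y) as [<-|Hne]; [lra|].
  apply Rnot_lt_le; intro Hlt.
  set (eps := (phi x - phi y) / (2 * (y - x))).
  assert (Heps : eps > 0) by (apply Rdiv_lt_0_compat; lra).
  assert (Hall : forall t, x <= t <= y -> phi t >= phi x - eps * (t - x)).
  { apply real_induction; [lra | lra | |].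
    - intros t Ht Hbefore.
      destruct (Hloc t ltac:(lra) eps Heps) as [delta [Hdelta Hd]].
      set (s := Rmax x (t - delta / 2)).
      assert (x <= s) by apply Rmax_l. assert (t - delta / 2 <= s) by apply Rmax_r.
      assert (s < t) by (apply Rmax_lub_lt; lra).
      specialize (Hd s ltac:(lra) ltac:(rewrite Rabs_left; lra)).
      specialize (Hbefore s ltac:(lra)). nra.
    - intros t Ht Hphit.
      destruct (Hloc t ltac:(lra) eps Heps) as [delta [Hdelta Hd]].
      exists (Rmin delta (y - t)). split; [apply Rmin_glb_lt; lra|].
      intros r Hr.
      assert (Rmin delta (y - t) <= delta) by apply Rmin_l.
      assert (Rmin delta (y - t) <= y - t) by apply Rmin_r.
      specialize (Hd r ltac:(lra) ltac:(rewrite Rabs_right; lra)). nra. }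
  specialize (Hall y ltac:(lra)).
  replace (eps * (y - x)) with ((phi x - phi y) / 2) in Hall by (unfold eps; field; lra).
  lra.
Qed.

Lemma first_order_remainders_small (P w : R -> R) t dP dw a b :
  is_derive P t dP -> is_derive w t dw ->
  forall eps, eps > 0 -> exists delta, delta > 0 /\ forall s, Rabs (s - t) < delta ->
    (a * (P s - P t - dP * (s - t)) + b * (w s - w t - dw * (s - t))) * (s - t)
      >= - eps * (s - t) ^ 2.
Proof.
  intros HdP Hdw eps Heps.
  assert (Ha := Rabs_pos a). assert (Hb := Rabs_pos b).
  set (eta := eps / (Rabs a + Rabs b + 1)).
  assert (Heta : eta > 0) by (apply Rdiv_lt_0_compat; lra).
  assert (Heta_eps : (Rabs a + Rabs b) * eta <= eps).
  { apply (Rmult_le_reg_r (Rabs a + Rabs b + 1)); [lra|].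
    unfold eta. field_simplify; nra. }
  destruct (is_derive_first_order P t _ HdP eta Heta) as [d1 [Hd1 HP1]].
  destruct (is_derive_first_order w t _ Hdw eta Heta) as [d2 [Hd2 Hw1]].
  exists (Rmin d1 d2). split; [apply Rmin_glb_lt; lra|].
  intros s Hst.
  assert (Rmin d1 d2 <= d1) by apply Rmin_l. assert (Rmin d1 d2 <= d2) by apply Rmin_r.
  specialize (HP1 s ltac:(lra)). specialize (Hw1 s ltac:(lra)).
  set (q1 := P s - P t - dP * (s - t)) in *. set (q2 := w s - w t - dw * (s - t)) in *.
  assert (Hst_abs := Rabs_pos (s - t)).
  assert (Hq : Rabs (a * q1 + b * q2) <= (Rabs a + Rabs b) * eta * Rabs (s - t)).
  { eapply Rle_trans; [apply Rabs_triang|]. rewrite !Rabs_mult.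
    assert (Rabs a * Rabs q1 <= Rabs a * (eta * Rabs (s - t)))
      by (apply Rmult_le_compat_l; auto).
    assert (Rabs b * Rabs q2 <= Rabs b * (eta * Rabs (s - t)))
      by (apply Rmult_le_compat_l; auto).
    nra. }
  assert (Rabs ((a * q1 + b * q2) * (s - t)) <= eps * (s - t) ^ 2).
  { rewrite Rabs_mult, <- pow2_abs.
    apply Rle_trans with ((Rabs a + Rabs b) * eta * Rabs (s - t) * Rabs (s - t));
      [apply Rmult_le_compat_r; auto | nra]. }
  apply Rabs_le_between in H1. lra.
Qed.

Lemma nondecreasing_increments (X : R -> R) y1 y2 s t :
  (forall a b, y1 <= a -> a <= b -> b <= y2 -> X a <= X b) ->
  y1 <= s <= y2 -> y1 <= t <= y2 -> 0 <= (X s - X t) * (s - t).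
Proof.
  intros HX Hs Ht. destruct (Rle_dec s t).
  - assert (X s <= X t) by (apply HX; lra). nra.
  - assert (X t <= X s) by (apply HX; lra). nra.
Qed.

(* The first-order terms of [A * P + w * B] cancel because [A * P' + B * w' = 0],
   and the remaining terms have the sign of the increments of [A] and [B]. *)
Lemma nondecreasing_weighted_sum (A B P w dP dw : R -> R) y1 y2 : y1 <= y2 ->
  (forall a b, y1 <= a -> a <= b -> b <= y2 -> A a <= A b) ->
  (forall a b, y1 <= a -> a <= b -> b <= y2 -> B a <= B b) ->
  (forall s, y1 <= s <= y2 -> 0 < P s /\ 0 < w s) ->
  (forall s, y1 <= s <= y2 -> is_derive P s (dP s) /\ is_derive w s (dw s)) ->
  (forall s, y1 <= s <= y2 -> A s * dP s + B s * dw s = 0) ->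
  A y1 * P y1 + w y1 * B y1 <= A y2 * P y2 + w y2 * B y2.
Proof.
  intros H12 HA HB Hpos Hder Hcancel.
  apply (nondecreasing_of_local (fun x => A x * P x + w x * B x) y1 y2 H12).
  intros t Ht eps Heps.
  destruct (Hder t Ht) as [HdP Hdw].
  destruct (first_order_remainders_small P w t (dP t) (dw t) (A t) (B t) HdP Hdw eps Heps)
    as [delta [Hdelta Hrem]].
  exists delta. split; [exact Hdelta|].
  intros s Hs Hst. specialize (Hrem s Hst).
  destruct (Hpos s Hs) as [HPs Hws].
  assert (0 <= P s * ((A s - A t) * (s - t)))
    by (apply Rmult_le_pos; [lra | apply (nondecreasing_increments A y1 y2); auto]).
  assert (0 <= w s * ((B s - B t) * (s - t)))
    by (apply Rmult_le_pos; [lra | apply (nondecreasing_increments B y1 y2); auto]).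
  assert (Hid : (A s * P s + w s * B s - (A t * P t + w t * B t)) * (s - t) =
     P s * ((A s - A t) * (s - t)) + w s * ((B s - B t) * (s - t))
     + (A t * (P s - P t - dP t * (s - t)) + B t * (w s - w t - dw t * (s - t))) * (s - t)
     + (A t * dP t + B t * dw t) * (s - t) ^ 2) by ring.
  rewrite Hid, (Hcancel t Ht). lra.
Qed.

Lemma continuity_of_ex_derive (G : R -> R) : (forall x, ex_derive G x) -> continuity G.
Proof.
  intros Hd x. apply continuity_pt_filterlim.
  exact (@ex_derive_continuous R_AbsRing R_NormedModule G x (Hd x)).
Qed.

Lemma continuity_pt_locally_in (G : R -> R) x a b : continuity_pt G x -> a < G x < b ->
  exists delta, delta > 0 /\ forall y, Rabs (y - x) < delta -> a < G y < b.
Proof.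
  intros Hc Hx.
  destruct (Hc (Rmin (G x - a) (b - G x))) as [delta [Hdelta H]];
    [apply Rmin_glb_lt; lra|].
  exists delta. split; [lra|]. intros y Hy.
  assert (Rmin (G x - a) (b - G x) <= G x - a) by apply Rmin_l.
  assert (Rmin (G x - a) (b - G x) <= b - G x) by apply Rmin_r.
  destruct (Req_dec y x) as [->|Hne]; [lra|].
  specialize (H y (conj (conj I (not_eq_sym Hne)) Hy)).
  simpl in H. unfold R_dist in H. apply Rabs_lt_between in H. lra.
Qed.

Definition adherent (P : R -> Prop) (x : R) : Prop :=
  forall delta, delta > 0 -> exists y, Rabs (y - x) < delta /\ P y.

Lemma adherent_interval c d x : c < d -> c <= x <= d -> adherent (fun y => c < y < d) x.
Proof.
  intros Hcd Hx delta Hdelta.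
  set (h := Rmin (delta / 2) ((d - c) / 4)).
  assert (h <= delta / 2) by apply Rmin_l. assert (h <= (d - c) / 4) by apply Rmin_r.
  assert (0 < h) by (apply Rmin_glb_lt; lra).
  destruct (Rle_lt_dec x ((c + d) / 2)).
  - exists (x + h). split; [rewrite Rabs_right|]; lra.
  - exists (x - h). split; [rewrite Rabs_left|]; lra.
Qed.

Lemma continuity_pt_adherent_bounds (G : R -> R) (P : R -> Prop) x a b :
  continuity_pt G x -> adherent P x -> (forall y, P y -> a < G y < b) -> a <= G x <= b.
Proof.
  intros Hc Hadh HP.
  split; apply Rnot_lt_le; intro Hout.
  - destruct (continuity_pt_locally_in G x (G x - 1) a Hc ltac:(lra)) as [delta [Hd H]].
    destruct (Hadh delta Hd) as [y [Hy HPy]].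
    specialize (H y Hy). specialize (HP y HPy). lra.
  - destruct (continuity_pt_locally_in G x b (G x + 1) Hc ltac:(lra)) as [delta [Hd H]].
    destruct (Hadh delta Hd) as [y [Hy HPy]].
    specialize (H y Hy). specialize (HP y HPy). lra.
Qed.

Lemma Derive_neq0_injective (G : R -> R) p q z1 z2 :
  (forall x, ex_derive G x) -> (forall x, p < x < q -> Derive G x <> 0) ->
  p <= z1 -> z1 < z2 -> z2 <= q -> G z1 <> G z2.
Proof.
  intros Hd Hnz H1 H2 H3 Heq.
  destruct (MVT_cor2 G (Derive G) z1 z2 H2) as [x [Hx1 Hx2]].
  { intros x _. apply is_derive_Reals, Derive_correct, Hd. }
  assert (Hprod : Derive G x * (z2 - z1) = 0) by lra.
  apply Rmult_integral in Hprod as [Hprod|Hprod]; [apply (Hnz x); auto; lra | lra].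
Qed.

Lemma Derive_neq0_lower_bound (G : R -> R) p q a :
  (forall x, ex_derive G x) -> (forall x, p < x < q -> Derive G x <> 0) -> p <= q ->
  a < G p -> a < G q -> forall x, p <= x <= q -> a < G x.
Proof.
  intros Hd Hnz Hpq Hp Hq x Hx.
  apply Rnot_le_lt; intro Hlow.
  assert (Hc := continuity_of_ex_derive G Hd).
  set (m := (a + Rmin (G p) (G q)) / 2).
  assert (Rmin (G p) (G q) <= G p) by apply Rmin_l.
  assert (Rmin (G p) (G q) <= G q) by apply Rmin_r.
  assert (a < Rmin (G p) (G q)) by (apply Rmin_glb_lt; lra).
  destruct (IVT_gen G p x m Hc) as [z1 [Hz1 Hz1']].
  { rewrite Rmin_right, Rmax_left; unfold m; lra. }
  destruct (IVT_gen G x q m Hc) as [z2 [Hz2 Hz2']].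
  { rewrite Rmin_left, Rmax_right; unfold m; lra. }
  rewrite Rmin_left, Rmax_right in Hz1, Hz2 by lra.
  assert (z1 <> x) by (intros ->; unfold m in *; lra).
  assert (z2 <> x) by (intros ->; unfold m in *; lra).
  apply (Derive_neq0_injective G p q z1 z2 Hd Hnz); lra.
Qed.

Lemma Derive_neq0_maps_into (G : R -> R) p q a b :
  (forall x, ex_derive G x) -> (forall x, p < x < q -> Derive G x <> 0) -> p <= q ->
  a < G p < b -> a < G q < b -> forall x, p <= x <= q -> a < G x < b.
Proof.
  intros Hd Hnz Hpq Hp Hq x Hx. split.
  - apply (Derive_neq0_lower_bound G p q); tauto.
  - enough (- b < - G x) by lra.
    apply (Derive_neq0_lower_bound (fun y => - G y) p q); try lra.
    + intros y. exact (@ex_derive_opp R_AbsRing R_NormedModule G y (Hd y)).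
    + intros y Hy. rewrite Derive_opp. specialize (Hnz y Hy). lra.
Qed.

Lemma exit_point_left (G : R -> R) a b lo w : continuity G -> lo <= w ->
  ~ (a < G lo < b) -> a < G w < b ->
  exists e, lo <= e < w /\ (G e = a \/ G e = b) /\ forall z, e < z <= w -> a < G z < b.
Proof.
  intros Hc Hlow Hlo Hw.
  set (K := fun y => lo <= y <= w /\ ~ (a < G y < b)).
  destruct (completeness K) as [e [Hub Hlub]].
  { exists w. intros y [Hy _]. lra. }
  { exists lo. split; [lra | exact Hlo]. }
  assert (Hloe : lo <= e) by (apply Hub; split; [lra | exact Hlo]).
  assert (Hew : e <= w) by (apply Hlub; intros y [Hy _]; lra).
  assert (Hafter : forall z, e < z <= w -> a < G z < b).
  { intros z Hz. apply NNPP; intro Hout.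
    assert (z <= e) by (apply Hub; split; [lra | exact Hout]). lra. }
  assert (Hout : ~ (a < G e < b)).
  { intro Hin.
    destruct (continuity_pt_locally_in G e a b (Hc e) Hin) as [delta [Hdelta Hd]].
    assert (e <= e - delta); [|lra].
    apply Hlub. intros y [Hy Hy']. apply Rnot_lt_le; intro Hlt.
    assert (y <= e) by (apply Hub; split; [lra | exact Hy']).
    apply Hy', Hd. rewrite Rabs_left1; lra. }
  assert (Hlt : e < w) by (destruct (Req_dec e w) as [->|]; [contradiction | lra]).
  assert (Hbounds : a <= G e <= b).
  { apply (continuity_pt_adherent_bounds G (fun z => e < z < w) e a b (Hc e)).
    - apply adherent_interval; lra.
    - intros z Hz. apply Hafter. lra. }
  exists e. split; [lra|]. split; [|exact Hafter].
  destruct (Req_dec (G e) a); [left | right]; auto. lra.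
Qed.

Lemma exit_point_right (G : R -> R) a b w hi : continuity G -> w <= hi ->
  a < G w < b -> ~ (a < G hi < b) ->
  exists e, w < e <= hi /\ (G e = a \/ G e = b) /\ forall z, w <= z < e -> a < G z < b.
Proof.
  intros Hc Hwhi Hw Hhi.
  assert (Hc' : continuity (fun x => G (- x))).
  { apply (continuity_comp (fun x => - x) G); [|exact Hc].
    apply continuity_opp, derivable_continuous, derivable_id. }
  destruct (exit_point_left (fun x => G (- x)) a b (- hi) (- w) Hc') as [e [He [HGe Hafter]]];
    rewrite ?Ropp_involutive; auto; [lra|].
  exists (- e). split; [lra|]. split; [exact HGe|].
  intros z Hz. replace z with (- - z) by ring. apply Hafter. lra.
Qed.

Lemma mvt_Rabs_bound (G : R -> R) a b K : a < b -> (forall x, ex_derive G x) ->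
  (forall x, a < x < b -> Rabs (Derive G x) <= K) -> Rabs (G b - G a) <= K * (b - a).
Proof.
  intros Hab Hd HK.
  destruct (MVT_cor2 G (Derive G) a b Hab) as [x [Hx Hxab]].
  { intros x _. apply is_derive_Reals, Derive_correct, Hd. }
  rewrite Hx, Rabs_mult, (Rabs_right (b - a)) by lra.
  apply Rmult_le_compat_r; [lra | auto].
Qed.

(** * Iterates of S-unimodal maps *)

Lemma iter_S_r n (g : R -> R) x : iter (S n) g x = iter n g (g x).
Proof. apply Nat.iter_succ_r. Qed.

Lemma iter_add m n (g : R -> R) x : iter (m + n) g x = iter m g (iter n g x).
Proof. apply Nat.iter_add. Qed.

Lemma iter_inI (g : R -> R) : (forall x, inI x -> inI (g x)) ->
  forall n x, inI x -> inI (iter n g x).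
Proof. intros H n. induction n as [|n IH]; intros x Hx; [exact Hx | apply H, IH, Hx]. Qed.

Lemma ex_derive_iter (g : R -> R) : (forall x, ex_derive g x) ->
  forall n x, ex_derive (iter n g) x.
Proof.
  intros H n. induction n as [|n IH]; intros x.
  - apply ex_derive_id.
  - apply (ex_derive_comp g (iter n g)); auto.
Qed.

Lemma Derive_iter_S (g : R -> R) n y : (forall x, ex_derive g x) ->
  Derive (iter (S n) g) y = Derive g y * Derive (iter n g) (g y).
Proof.
  intros H.
  rewrite (Derive_ext (iter (S n) g) (fun z => iter n g (g z))) by apply iter_S_r.
  apply Derive_comp; [apply ex_derive_iter | ]; auto.
Qed.

Definition inv_sqrt_deriv (g : R -> R) (x : R) : R := / sqrt (Rabs (Derive g x)).

Lemma inv_sqrt_deriv_pos (g : R -> R) x : Derive g x <> 0 -> 0 < inv_sqrt_deriv g x.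
Proof. intros H. apply Rinv_0_lt_compat, sqrt_lt_R0, Rabs_pos_lt, H. Qed.

Lemma Rabs_Derive_le_of_inv_sqrt_deriv_le (g : R -> R) x y :
  Derive g x <> 0 -> Derive g y <> 0 -> inv_sqrt_deriv g x <= inv_sqrt_deriv g y ->
  Rabs (Derive g y) <= Rabs (Derive g x).
Proof.
  unfold inv_sqrt_deriv. intros Hx Hy H.
  assert (0 < Rabs (Derive g x)) by (apply Rabs_pos_lt; auto).
  assert (0 < Rabs (Derive g y)) by (apply Rabs_pos_lt; auto).
  assert (0 < sqrt (Rabs (Derive g x))) by (apply sqrt_lt_R0; auto).
  assert (0 < sqrt (Rabs (Derive g y))) by (apply sqrt_lt_R0; auto).
  apply sqrt_le_0; try lra. apply Rnot_lt_le; intro Hlt.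
  assert (/ sqrt (Rabs (Derive g y)) < / sqrt (Rabs (Derive g x)))
    by (apply Rinv_lt_contravar; nra).
  lra.
Qed.

Lemma Derive_mul_inv_sqrt_deriv_sqr (g : R -> R) x : Derive g x <> 0 ->
  Derive g x * inv_sqrt_deriv g x ^ 2 = Derive g x / Rabs (Derive g x).
Proof.
  unfold inv_sqrt_deriv. intros H.
  assert (0 < Rabs (Derive g x)) by (apply Rabs_pos_lt; auto).
  assert (Hs := sqrt_sqrt (Rabs (Derive g x)) ltac:(lra)).
  assert (0 < sqrt (Rabs (Derive g x))) by (apply sqrt_lt_R0; auto).
  rewrite <- Hs at 2. field. lra.
Qed.

Section SUnimodal.

Variable F : R -> R.
Hypothesis HF : S_unimodal F.

Lemma S_unimodal_inI x : inI x -> inI (F x).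
Proof. apply HF. Qed.

Lemma S_unimodal_ex_derive x : ex_derive F x.
Proof. apply HF. Qed.

Lemma S_unimodal_ex_derive2 x : ex_derive (Derive F) x.
Proof. apply HF. Qed.

Lemma S_unimodal_Derive_neq0 x : inI x -> x <> 0 -> Derive F x <> 0.
Proof. destruct HF as (_ & _ & _ & _ & Hcrit & _). intros Hx Hx0 H0. apply Hx0, Hcrit; auto. Qed.

Definition regular_orbit n y : Prop :=
  forall i, (i < n)%nat -> inI (iter i F y) /\ iter i F y <> 0.

Lemma regular_orbit_S n y : regular_orbit (S n) y -> inI y /\ y <> 0 /\ regular_orbit n (F y).
Proof.
  intros H. destruct (H 0%nat ltac:(lia)) as [Hy Hy0].
  split; [exact Hy|]. split; [exact Hy0|].
  intros i Hi. rewrite <- iter_S_r. apply H. lia.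
Qed.

Lemma Derive_iter_neq0 n y : regular_orbit n y -> Derive (iter n F) y <> 0.
Proof.
  revert y. induction n as [|n IH]; intros y Hy.
  - change (Derive (fun x => x) y <> 0). rewrite Derive_id. lra.
  - destruct (regular_orbit_S n y Hy) as (HIy & Hy0 & Hreg).
    rewrite Derive_iter_S by exact S_unimodal_ex_derive.
    apply Rmult_integral_contrapositive.
    split; [apply S_unimodal_Derive_neq0 | apply IH]; auto.
Qed.


Lemma ex_derive_inv_sqrt_deriv x : inI x -> x <> 0 -> ex_derive (inv_sqrt_deriv F) x.
Proof.
  intros Hx Hx0. assert (Hnz := S_unimodal_Derive_neq0 x Hx Hx0).
  assert (Habs : 0 < Rabs (Derive F x)) by (apply Rabs_pos_lt, Hnz).
  eexists. unfold inv_sqrt_deriv.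
  apply (is_derive_inv (fun y => sqrt (Rabs (Derive F y)))).
  - apply (is_derive_sqrt (fun y => Rabs (Derive F y))); [|exact Habs].
    apply is_derive_Rabs; [apply Derive_correct, S_unimodal_ex_derive2 | exact Hnz].
  - apply Rgt_not_eq, sqrt_lt_R0, Habs.
Qed.

Lemma S_unimodal_lap y1 y2 : y1 <= y2 -> (forall y, y1 <= y <= y2 -> inI y /\ y <> 0) ->
  exists p q sg (D : R -> Prop), p < q /\ (sg = 1 \/ sg = -1) /\
    (forall a b, p <= a -> a < b -> b <= q -> sg * F a < sg * F b) /\
    convex_on (inv_sqrt_deriv F) D /\ forall y, y1 <= y <= y2 -> p <= y <= q /\ D y.
Proof.
  intros H12 Hseg.
  assert (Hside : (-1 <= y1 /\ y2 < 0) \/ (0 < y1 /\ y2 <= 1)).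
  { destruct (Hseg y1 ltac:(lra)) as [[? ?] Hy1]. destruct (Hseg y2 ltac:(lra)) as [[? ?] Hy2].
    destruct (Rlt_le_dec y2 0); [left; lra|].
    destruct (Rlt_le_dec 0 y1); [right; lra|].
    exfalso. apply (proj2 (Hseg 0 ltac:(lra))). reflexivity. }
  destruct HF as (_ & _ & _ & Hmono & _ & HcvL & HcvR & _).
  destruct Hside as [Hl|Hr]; destruct Hmono as [[Hinc Hdec]|[Hdec Hinc]].
  - exists (-1), 0, 1, (fun x => -1 <= x < 0). repeat split; auto; try lra.
    intros a b Ha Hab Hb. specialize (Hinc a b Ha Hab Hb). lra.
  - exists (-1), 0, (-1), (fun x => -1 <= x < 0). repeat split; auto; try lra.
    intros a b Ha Hab Hb. specialize (Hdec a b Ha Hab Hb). lra.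
  - exists 0, 1, (-1), (fun x => 0 < x <= 1). repeat split; auto; try lra.
    intros a b Ha Hab Hb. specialize (Hdec a b Ha Hab Hb). lra.
  - exists 0, 1, 1, (fun x => 0 < x <= 1). repeat split; auto; try lra.
    intros a b Ha Hab Hb. specialize (Hinc a b Ha Hab Hb). lra.
Qed.

Lemma S_unimodal_segment y1 y2 : y1 <= y2 ->
  (forall y, y1 <= y <= y2 -> inI y /\ y <> 0) ->
  exists sg, (sg = 1 \/ sg = -1) /\
    (forall y, y1 <= y <= y2 -> Derive F y * inv_sqrt_deriv F y ^ 2 = sg) /\
    (forall a b, y1 <= a -> a < b -> b <= y2 -> sg * F a < sg * F b) /\
    (forall a b, y1 <= a -> a <= b -> b <= y2 ->
       Derive (inv_sqrt_deriv F) a <= Derive (inv_sqrt_deriv F) b).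
Proof.
  intros H12 Hseg.
  destruct (S_unimodal_lap y1 y2 H12 Hseg)
    as (p & q & sg & D & Hpq & Hsg & Hmono & Hconv & HpqD).
  exists sg. split; [exact Hsg|]. split; [|split].
  - intros y Hy. destruct (Hseg y Hy) as [HIy Hy0].
    assert (Hnz := S_unimodal_Derive_neq0 y HIy Hy0).
    rewrite Derive_mul_inv_sqrt_deriv_sqr by exact Hnz.
    assert (Hpos : 0 <= sg * Derive F y).
    { apply (is_derive_ge0_of_increasing (fun x => sg * F x) p q y); auto.
      - apply HpqD, Hy.
      - apply is_derive_scal, Derive_correct, S_unimodal_ex_derive. }
    destruct Hsg as [->| ->].
    + rewrite Rabs_right by lra. field. lra.
    + rewrite Rabs_left by lra. field. lra.
  - intros a b Ha Hab Hb. apply Hmono; [apply HpqD | | apply HpqD]; lra.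
  - intros a b Ha Hab Hb. destruct (Req_dec a b) as [->|Hne]; [lra|].
    apply (convex_on_is_derive_le (inv_sqrt_deriv F) D a b); [exact Hconv | | lra | |];
      [intros z Hz; apply HpqD; lra | |];
      apply Derive_correct, ex_derive_inv_sqrt_deriv; apply Hseg; lra.
Qed.

Lemma inv_sqrt_deriv_iter_S n y :
  inv_sqrt_deriv (iter (S n) F) y = inv_sqrt_deriv F y * inv_sqrt_deriv (iter n F) (F y).
Proof.
  unfold inv_sqrt_deriv.
  rewrite Derive_iter_S by apply S_unimodal_ex_derive.
  rewrite Rabs_mult, sqrt_mult_alt by apply Rabs_pos. apply Rinv_mult.
Qed.

Lemma inv_sqrt_deriv_iter_0 : forall y, inv_sqrt_deriv (iter 0 F) y = 1.
Proof.
  intros y. unfold inv_sqrt_deriv. change (iter 0 F) with (fun x : R => x).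
  rewrite Derive_id, Rabs_R1, sqrt_1. apply Rinv_1.
Qed.

Lemma ex_derive_inv_sqrt_deriv_iter n y : regular_orbit n y ->
  ex_derive (inv_sqrt_deriv (iter n F)) y.
Proof.
  revert y. induction n as [|n IH]; intros y Hy.
  - apply (ex_derive_ext (fun _ => 1)); [intros; symmetry; apply inv_sqrt_deriv_iter_0|].
    apply ex_derive_const.
  - destruct (regular_orbit_S n y Hy) as (HIy & Hy0 & Hreg).
    apply (ex_derive_ext (fun z => inv_sqrt_deriv F z * inv_sqrt_deriv (iter n F) (F z)));
      [intros; symmetry; apply inv_sqrt_deriv_iter_S|].
    apply ex_derive_mult; [apply ex_derive_inv_sqrt_deriv; auto|].
    apply (ex_derive_comp (inv_sqrt_deriv (iter n F)) F); [apply IH, Hreg|].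
    apply S_unimodal_ex_derive.
Qed.

Lemma regular_orbit_image n p q : p <= q ->
  (forall y, p <= y <= q -> regular_orbit (S n) y) ->
  forall z, Rmin (F p) (F q) <= z <= Rmax (F p) (F q) -> regular_orbit n z.
Proof.
  intros Hpq Hreg z Hz.
  assert (Hc : continuity F)
    by (apply continuity_of_ex_derive; intros; apply S_unimodal_ex_derive).
  destruct (IVT_gen F p q z Hc Hz) as [x [Hx <-]].
  rewrite Rmin_left, Rmax_right in Hx by lra.
  apply (regular_orbit_S n x (Hreg x Hx)).
Qed.

Lemma Derive_inv_sqrt_deriv_iter_S n y : regular_orbit (S n) y ->
  Derive (inv_sqrt_deriv (iter (S n) F)) y =
  Derive (inv_sqrt_deriv F) y * inv_sqrt_deriv (iter n F) (F y) +
  inv_sqrt_deriv F y * (Derive F y * Derive (inv_sqrt_deriv (iter n F)) (F y)).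
Proof.
  intros Hy. destruct (regular_orbit_S n y Hy) as (HIy & Hy0 & HregF).
  assert (HexF := S_unimodal_ex_derive y).
  assert (Hexv := ex_derive_inv_sqrt_deriv_iter n (F y) HregF).
  rewrite (Derive_ext _ (fun z => inv_sqrt_deriv F z * inv_sqrt_deriv (iter n F) (F z)))
    by apply inv_sqrt_deriv_iter_S.
  rewrite Derive_mult;
    [| apply ex_derive_inv_sqrt_deriv; auto | apply (ex_derive_comp _ F); auto].
  rewrite (Derive_comp (inv_sqrt_deriv (iter n F)) F y) by auto. ring.
Qed.

(* With [u = inv_sqrt_deriv F], [v = inv_sqrt_deriv (iter n F)] and [F' u^2 = sg],
   the derivative of [v_(n+1) = u * (v o F)] is [A / u + (v o F) * u'] with the
   nondecreasing factors [A = sg * (v' o F)] and [u']: convexity of [|F'|^(-1/2)]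
   on the laps (negative Schwarzian derivative) propagates to the iterates. *)
Lemma Derive_inv_sqrt_deriv_iter_nondecreasing_S n :
  (forall y1 y2, y1 <= y2 -> (forall y, y1 <= y <= y2 -> regular_orbit n y) ->
     Derive (inv_sqrt_deriv (iter n F)) y1 <= Derive (inv_sqrt_deriv (iter n F)) y2) ->
  forall y1 y2, y1 <= y2 -> (forall y, y1 <= y <= y2 -> regular_orbit (S n) y) ->
    Derive (inv_sqrt_deriv (iter (S n) F)) y1 <= Derive (inv_sqrt_deriv (iter (S n) F)) y2.
Proof.
  intros IH y1 y2 H12 Hreg.
  rewrite !Derive_inv_sqrt_deriv_iter_S by (apply Hreg; lra).
  set (u := inv_sqrt_deriv F). set (v := inv_sqrt_deriv (iter n F)).
  assert (Hseg : forall y, y1 <= y <= y2 -> inI y /\ y <> 0)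
    by (intros y Hy; destruct (regular_orbit_S n y (Hreg y Hy)) as (? & ? & _); auto).
  assert (HregF : forall y, y1 <= y <= y2 -> regular_orbit n (F y))
    by (intros y Hy; apply (regular_orbit_S n y (Hreg y Hy))).
  destruct (S_unimodal_segment y1 y2 H12 Hseg) as (sg & Hsg & Hsgn & Hmono & HDu).
  assert (Hupos : forall y, y1 <= y <= y2 -> 0 < u y)
    by (intros y Hy; apply inv_sqrt_deriv_pos, S_unimodal_Derive_neq0; apply Hseg; auto).
  set (A := fun y => sg * Derive v (F y)).
  assert (Hform : forall y, y1 <= y <= y2 ->
    Derive u y * v (F y) + u y * (Derive F y * Derive v (F y)) =
    A y * / u y + v (F y) * Derive u y).
  { intros y Hy. specialize (Hupos y Hy). unfold A. rewrite <- (Hsgn y Hy).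
    fold u. field. lra. }
  rewrite !Hform by lra.
  apply (nondecreasing_weighted_sum A (Derive u) (fun y => / u y) (fun y => v (F y))
           (fun y => - Derive u y / u y ^ 2) (fun y => Derive F y * Derive v (F y))
           y1 y2 H12).
  - intros a b Ha Hab Hb. unfold A.
    destruct (Req_dec a b) as [->|Hne]; [lra|].
    assert (Himg := regular_orbit_image n a b Hab (fun y Hy => Hreg y ltac:(lra))).
    specialize (Hmono a b Ha ltac:(lra) Hb).
    destruct Hsg as [->| ->].
    + assert (Derive v (F a) <= Derive v (F b)); [|lra].
      apply IH; [lra|]. intros z Hz. apply Himg. rewrite Rmin_left, Rmax_right; lra.
    + assert (Derive v (F b) <= Derive v (F a)); [|lra].
      apply IH; [lra|]. intros z Hz. apply Himg. rewrite Rmin_right, Rmax_left; lra.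
  - exact HDu.
  - intros s Hs. split.
    + apply Rinv_0_lt_compat, Hupos, Hs.
    + apply inv_sqrt_deriv_pos, Derive_iter_neq0, HregF, Hs.
  - intros s Hs. split.
    + apply is_derive_inv; [|apply Rgt_not_eq, Hupos, Hs].
      apply Derive_correct, ex_derive_inv_sqrt_deriv; apply Hseg, Hs.
    + apply (is_derive_comp v F s); apply Derive_correct;
        [apply ex_derive_inv_sqrt_deriv_iter, HregF, Hs | apply S_unimodal_ex_derive].
  - intros s Hs. specialize (Hupos s Hs). unfold A.
    rewrite <- (Hsgn s Hs). fold u. field. lra.
Qed.

Lemma Derive_inv_sqrt_deriv_iter_nondecreasing n y1 y2 : y1 <= y2 ->
  (forall y, y1 <= y <= y2 -> regular_orbit n y) ->
  Derive (inv_sqrt_deriv (iter n F)) y1 <= Derive (inv_sqrt_deriv (iter n F)) y2.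
Proof.
  revert y1 y2. induction n as [|n IH]; intros y1 y2 H12 Hreg.
  - rewrite (Derive_ext _ (fun _ => 1) y1), (Derive_ext _ (fun _ => 1) y2)
      by apply inv_sqrt_deriv_iter_0.
    rewrite !Derive_const. lra.
  - exact (Derive_inv_sqrt_deriv_iter_nondecreasing_S n IH y1 y2 H12 Hreg).
Qed.

End SUnimodal.

Section MinimumPrinciple.

Variables (g : R -> R) (p q : R).
Hypothesis g_ex_derive : forall y, ex_derive g y.
Hypothesis g_Derive_neq0 : forall y, p < y < q -> Derive g y <> 0.
Hypothesis v_ex_derive : forall y, p < y < q -> ex_derive (inv_sqrt_deriv g) y.
Hypothesis v_convex : forall y1 y2, p < y1 -> y1 <= y2 -> y2 < q ->
  Derive (inv_sqrt_deriv g) y1 <= Derive (inv_sqrt_deriv g) y2.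

Lemma inv_sqrt_deriv_mvt y1 y2 : p < y1 -> y1 < y2 -> y2 < q ->
  exists xi, y1 < xi < y2 /\
    inv_sqrt_deriv g y2 - inv_sqrt_deriv g y1 = Derive (inv_sqrt_deriv g) xi * (y2 - y1).
Proof.
  intros H1 H12 H2.
  destruct (MVT_cor2 (inv_sqrt_deriv g) (Derive (inv_sqrt_deriv g)) y1 y2 H12)
    as [xi [Hxi Hxi12]].
  { intros y Hy. apply is_derive_Reals, Derive_correct, v_ex_derive. lra. }
  exists xi. auto.
Qed.

Lemma Rabs_Derive_le_right x r : p < x -> x <= r -> r < q ->
  0 <= Derive (inv_sqrt_deriv g) x -> Rabs (Derive g r) <= Rabs (Derive g x).
Proof.
  intros Hx Hxr Hr Hv. destruct (Req_dec r x) as [->|Hne]; [lra|].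
  apply Rabs_Derive_le_of_inv_sqrt_deriv_le; [apply g_Derive_neq0; lra ..|].
  destruct (inv_sqrt_deriv_mvt x r) as [xi [Hxi Hdiff]]; try lra.
  assert (Derive (inv_sqrt_deriv g) x <= Derive (inv_sqrt_deriv g) xi)
    by (apply v_convex; lra).
  nra.
Qed.

Lemma Rabs_Derive_le_left x r : p < r -> r <= x -> x < q ->
  Derive (inv_sqrt_deriv g) x <= 0 -> Rabs (Derive g r) <= Rabs (Derive g x).
Proof.
  intros Hr Hrx Hx Hv. destruct (Req_dec r x) as [->|Hne]; [lra|].
  apply Rabs_Derive_le_of_inv_sqrt_deriv_le; [apply g_Derive_neq0; lra ..|].
  destruct (inv_sqrt_deriv_mvt r x) as [xi [Hxi Hdiff]]; try lra.
  assert (Derive (inv_sqrt_deriv g) xi <= Derive (inv_sqrt_deriv g) x)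
    by (apply v_convex; lra).
  nra.
Qed.

(* [|g'|] has no strict interior minimum, so [|g' x|] dominates [|g'|] on one of
   the two sides of [x]. *)
Lemma Rabs_Derive_min_principle c x d : p < c -> c <= x <= d -> d < q ->
  Rabs (g q - g d) <= Rabs (Derive g x) * (q - d) \/
  Rabs (g c - g p) <= Rabs (Derive g x) * (c - p).
Proof.
  intros Hc Hx Hd.
  destruct (Rle_lt_dec 0 (Derive (inv_sqrt_deriv g) x)) as [Hv|Hv].
  - left. apply mvt_Rabs_bound; [lra | exact g_ex_derive |].
    intros r Hr. apply Rabs_Derive_le_right; lra.
  - right. apply mvt_Rabs_bound; [lra | exact g_ex_derive |].
    intros r Hr. apply Rabs_Derive_le_left; lra.
Qed.

End MinimumPrinciple.

(** * Pulling back a branch of the first return map *)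

Section FirstReturnBranch.

Variable F : R -> R.
Hypothesis HF : S_unimodal F.
Variables a0 b0 a1 b1 : R.
Hypothesis U0_inI : -1 <= a0 /\ b0 <= 1.
Hypothesis U1_in_U0 : a0 < a1 /\ b1 < b0.
Hypothesis U1_around_0 : a1 < 0 < b1.
Hypothesis boundary_orbits : forall x, (x = a0 \/ x = b0 \/ x = a1 \/ x = b1) ->
  forall k : nat, (k >= 1)%nat -> ~ in_open a0 b0 (iter k F x).
Hypothesis critical_return :
  (forall k : nat, (k >= 1)%nat -> ~ in_open a0 b0 (iter k F 0)) \/
  (exists k : nat, (k >= 1)%nat /\ in_open a1 b1 (iter k F 0) /\
     forall j : nat, (1 <= j < k)%nat -> ~ in_open a0 b0 (iter j F 0)).
Variables (c d : R) (n : nat).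
Hypothesis W_branch : is_branch F a1 b1 c d n.
Hypothesis W_noncentral : ~ central c d.

Local Notation g := (iter n F).

Lemma iter_F_ex_derive k x : ex_derive (iter k F) x.
Proof. apply ex_derive_iter. intros. apply S_unimodal_ex_derive, HF. Qed.

Lemma iter_F_continuity k : continuity (iter k F).
Proof. apply continuity_of_ex_derive, iter_F_ex_derive. Qed.

Lemma W_bounds : a1 <= c /\ c < d /\ d <= b1.
Proof. destruct W_branch as (? & ? & ? & _). auto. Qed.

Lemma W_return x : c < x < d -> return_time F a1 b1 x n.
Proof. apply W_branch. Qed.

Lemma return_time_ge1 : (n >= 1)%nat.
Proof. destruct W_bounds as (_ & Hcd & _). apply (W_return ((c + d) / 2)). lra. Qed.

Lemma W_maps_into_U1 x : c < x < d -> a1 < g x < b1.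
Proof. intros Hx. apply (W_return x Hx). Qed.

Lemma W_closure_maps_into_U1 x : c <= x <= d -> a1 <= g x <= b1.
Proof.
  intros Hx. destruct W_bounds as (_ & Hcd & _).
  apply (continuity_pt_adherent_bounds g (fun y => c < y < d));
    [apply iter_F_continuity | apply adherent_interval; lra | exact W_maps_into_U1].
Qed.

Lemma boundary_orbit_avoids_U1 x : (x = a0 \/ x = b0 \/ x = a1 \/ x = b1) ->
  forall k, (k >= 1)%nat -> ~ (a1 < iter k F x < b1).
Proof.
  intros Hx k Hk Hin. apply (boundary_orbits x Hx k Hk). unfold in_open. lra.
Qed.

Lemma hull_exists : exists ch dh, a1 <= ch < c /\ d < dh <= b1 /\
  ((g ch = a0 \/ g ch = b0) /\ (g dh = a0 \/ g dh = b0)) /\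
  forall x, ch < x < dh -> a0 < g x < b0.
Proof.
  destruct W_bounds as (Ha1c & Hcd & Hdb1).
  set (w := (c + d) / 2).
  assert (Hw : a0 < g w < b0) by (assert (H := W_maps_into_U1 w ltac:(unfold w; lra)); lra).
  destruct (exit_point_left g a0 b0 a1 w (iter_F_continuity n)) as (ch & Hch & Hgch & Hafter);
    [unfold w; lra | apply (boundary_orbits a1); auto; apply return_time_ge1 | exact Hw |].
  destruct (exit_point_right g a0 b0 w b1 (iter_F_continuity n)) as (dh & Hdh & Hgdh & Hbefore);
    [unfold w; lra | exact Hw | apply (boundary_orbits b1); auto; apply return_time_ge1 |].
  assert (Hend : forall e, (g e = a0 \/ g e = b0) -> ~ (c <= e <= d)).
  { intros e He Hed. assert (H := W_closure_maps_into_U1 e Hed). lra. }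
  exists ch, dh. split; [|split; [|split; [auto|]]].
  - split; [lra|]. apply Rnot_le_lt. intro. apply (Hend ch Hgch). unfold w in *; lra.
  - split; [|lra]. apply Rnot_le_lt. intro. apply (Hend dh Hgdh). unfold w in *; lra.
  - intros x Hx. destruct (Rle_lt_dec x w); [apply Hafter | apply Hbefore]; lra.
Qed.

Section Hull.

Variables ch dh : R.
Hypothesis hull_bounds : a1 <= ch < c /\ d < dh <= b1.
Hypothesis hull_ends : (g ch = a0 \/ g ch = b0) /\ (g dh = a0 \/ g dh = b0).
Hypothesis hull_maps_into_U0 : forall x, ch < x < dh -> a0 < g x < b0.

(* Otherwise the intermediate value theorem between [y] and a point of [W] (which
   does not visit [U1] before time [n]) gives a point of the hull mapped onto [a1]
   or [b1] at time [i], whose orbit then enters [U0] at time [n]. *)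
Lemma hull_no_early_return y i : ch < y < dh -> (1 <= i < n)%nat ->
  ~ (a1 < iter i F y < b1).
Proof.
  intros Hy Hi Hin. destruct W_bounds as (_ & Hcd & _).
  set (w := (c + d) / 2).
  assert (Hw : ~ (a1 < iter i F w < b1))
    by (destruct (W_return w ltac:(unfold w; lra)) as (_ & _ & Hfirst); apply (Hfirst i Hi)).
  assert (Hv : exists v, (v = a1 \/ v = b1) /\
            Rmin (iter i F y) (iter i F w) <= v <= Rmax (iter i F y) (iter i F w)).
  { destruct (Rle_lt_dec (iter i F w) a1).
    - exists a1. split; [auto|]. unfold Rmin, Rmax.
      destruct (Rle_dec (iter i F y) (iter i F w)); lra.
    - exists b1. split; [auto|]. unfold Rmin, Rmax.
      destruct (Rle_dec (iter i F y) (iter i F w)); lra. }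
  destruct Hv as (v & Hv & Hbetween).
  destruct (IVT_gen (iter i F) y w v (iter_F_continuity i) Hbetween) as [z [Hz Hzv]].
  assert (Hzhull : ch < z < dh)
    by (unfold Rmin, Rmax in Hz; destruct (Rle_dec y w); unfold w in *; lra).
  assert (Hgz := hull_maps_into_U0 z Hzhull).
  replace n with ((n - i) + i)%nat in Hgz by lia.
  rewrite iter_add, Hzv in Hgz.
  apply (boundary_orbits v ltac:(tauto) (n - i)%nat ltac:(lia)). exact Hgz.
Qed.

Lemma hull_regular_off_critical y : ch < y < dh -> y <> 0 -> regular_orbit F n y.
Proof.
  intros Hy Hy0 i Hi.
  assert (HIy : inI y) by (unfold inI; lra).
  split; [apply iter_inI; [apply S_unimodal_inI, HF | exact HIy]|].
  destruct i as [|i]; [exact Hy0|].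
  intros H0. apply (hull_no_early_return y (S i) Hy ltac:(lia)). rewrite H0. lra.
Qed.

Lemma hull_Derive_neq0_off_critical p q x : ch <= p -> q <= dh -> ~ (p < 0 < q) ->
  p < x < q -> Derive g x <> 0.
Proof.
  intros Hp Hq H0 Hx. apply (Derive_iter_neq0 F HF), hull_regular_off_critical; [lra|].
  intros ->. lra.
Qed.

Lemma hull_maximal c' d' : ch <= c' -> c' <= c -> d <= d' -> d' <= dh ->
  (forall x, c' < x < d' -> a1 < g x < b1) -> c' = c /\ d' = d.
Proof.
  intros Hc' Hc'c Hdd' Hd' Hmaps.
  destruct W_branch as (_ & _ & _ & _ & Hmax).
  apply Hmax; try lra.
  intros x Hx. unfold in_open in Hx. split; [apply return_time_ge1|]. split; [apply Hmaps, Hx|].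
  intros j Hj. apply (hull_no_early_return x j); [lra | exact Hj].
Qed.

Lemma critical_value_in_U1 : ch < 0 < dh -> a1 < g 0 < b1.
Proof.
  intros H0. assert (Hg0 := hull_maps_into_U0 0 H0).
  destruct critical_return as [Hnever | (k & Hk1 & Hk & Hfirst)].
  - exfalso. apply (Hnever n return_time_ge1). exact Hg0.
  - destruct (Compare_dec.lt_eq_lt_dec k n) as [[Hkn | ->] | Hnk].
    + exfalso. apply (hull_no_early_return 0 k H0 ltac:(lia)). exact Hk.
    + exact Hk.
    + exfalso. apply (Hfirst n (conj return_time_ge1 Hnk)). exact Hg0.
Qed.

Lemma critical_segment_maps_into_U1 w x : ch < 0 < dh -> c < w < d ->
  Rmin w 0 <= x <= Rmax w 0 -> a1 < g x < b1.
Proof.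
  intros H0 Hw.
  assert (Hgw := W_maps_into_U1 w Hw).
  assert (Hg0 := critical_value_in_U1 H0).
  destruct (Rle_lt_dec w 0) as [Hw0|Hw0].
  - rewrite Rmin_left, Rmax_right by lra.
    apply (Derive_neq0_maps_into g w 0); [apply iter_F_ex_derive | | lra | auto | auto].
    intros y Hy. apply (hull_Derive_neq0_off_critical w 0); lra.
  - rewrite Rmin_right, Rmax_left by lra.
    apply (Derive_neq0_maps_into g 0 w); [apply iter_F_ex_derive | | lra | auto | auto].
    intros y Hy. apply (hull_Derive_neq0_off_critical 0 w); lra.
Qed.

(* Otherwise [W], the segment from [W] to [0] and a neighbourhood of [0] would
   all return to [U1] at time [n], so [W] would not be maximal. *)
Lemma critical_not_in_hull : ~ (ch < 0 < dh).
Proof.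
  intros H0. destruct W_bounds as (_ & Hcd & _).
  destruct (continuity_pt_locally_in g 0 a1 b1 (iter_F_continuity n 0)
              (critical_value_in_U1 H0)) as [delta [Hdelta Hnear0]].
  assert (Rmin (- ch) dh <= - ch) by apply Rmin_l.
  assert (Rmin (- ch) dh <= dh) by apply Rmin_r.
  assert (0 < Rmin (- ch) dh) by (apply Rmin_glb_lt; lra).
  set (e := Rmin (delta / 2) (Rmin (- ch) dh / 2)).
  assert (e <= delta / 2) by apply Rmin_l.
  assert (e <= Rmin (- ch) dh / 2) by apply Rmin_r.
  assert (0 < e) by (apply Rmin_glb_lt; lra).
  set (w := (c + d) / 2).
  assert (Hw : c < w < d) by (unfold w; lra).
  destruct (hull_maximal (Rmin c (- e)) (Rmax d e)) as [Hc' Hd'].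
  - apply Rmin_glb; lra.
  - apply Rmin_l.
  - apply Rmax_l.
  - apply Rmax_lub; lra.
  - intros x Hx.
    destruct (Rlt_le_dec (Rabs x) e) as [Hsmall|Hbig];
      [apply Hnear0; rewrite Rminus_0_r; lra|].
    destruct (classic (c < x < d)) as [HW|HW]; [apply W_maps_into_U1, HW|].
    assert (c < x \/ - e < x) by (unfold Rmin in Hx; destruct (Rle_dec c (- e)); lra).
    assert (x < d \/ x < e) by (unfold Rmax in Hx; destruct (Rle_dec d e); lra).
    apply (critical_segment_maps_into_U1 w x H0 Hw).
    unfold Rmin, Rmax, w in *.
    destruct (Rle_dec ((c + d) / 2) 0);
      destruct (Rcase_abs x); [rewrite Rabs_left in Hbig | rewrite Rabs_right in Hbig
        | rewrite Rabs_left in Hbig | rewrite Rabs_right in Hbig]; lra.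
  - apply W_noncentral. unfold central.
    assert (c <= - e) by (rewrite <- Hc'; apply Rmin_r).
    assert (e <= d) by (rewrite <- Hd'; apply Rmax_r).
    lra.
Qed.

Lemma hull_Derive_neq0 x : ch < x < dh -> Derive g x <> 0.
Proof.
  intros Hx. apply (hull_Derive_neq0_off_critical ch dh); try lra.
  exact critical_not_in_hull.
Qed.

Lemma hull_regular_orbit y : ch < y < dh -> regular_orbit F n y.
Proof.
  intros Hy. apply hull_regular_off_critical; [exact Hy|].
  intros ->. apply critical_not_in_hull, Hy.
Qed.

Lemma hull_end_no_return e m : (g e = a0 \/ g e = b0) ->
  adherent (fun y => ch < y < dh) e -> ~ return_time F a1 b1 e m.
Proof.
  intros He Hadh (Hm & Hret & _). unfold in_open in Hret.
  destruct (Compare_dec.lt_eq_lt_dec m n) as [[Hmn | ->] | Hnm].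
  - destruct (continuity_pt_locally_in (iter m F) e a1 b1 (iter_F_continuity m e) Hret)
      as [delta [Hdelta Hnear]].
    destruct (Hadh delta Hdelta) as [y [Hy Hyhull]].
    apply (hull_no_early_return y m Hyhull ltac:(lia)), Hnear, Hy.
  - lra.
  - replace m with ((m - n) + n)%nat in Hret by lia. rewrite iter_add in Hret.
    destruct He as [He|He]; rewrite He in Hret;
      [apply (boundary_orbit_avoids_U1 a0) in Hret | apply (boundary_orbit_avoids_U1 b0) in Hret];
      auto; lia.
Qed.

Lemma hull_disjoint_central cc dc m : is_branch F a1 b1 cc dc m -> central cc dc ->
  dh <= cc \/ dc <= ch.
Proof.
  intros (_ & _ & _ & Hret & _) Hcentral. unfold central in Hcentral.
  destruct W_bounds as (_ & Hcd & _).
  destruct (Rle_lt_dec 0 ch) as [Hch0|Hch0].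
  - right. apply Rnot_lt_le. intro Hlt.
    apply (hull_end_no_return ch m (proj1 hull_ends)); [apply adherent_interval; lra|].
    apply Hret. unfold in_open. lra.
  - left. apply Rnot_lt_le. intro Hlt.
    assert (dh <= 0) by (apply Rnot_lt_le; intro; apply critical_not_in_hull; lra).
    apply (hull_end_no_return dh m (proj2 hull_ends)); [apply adherent_interval; lra|].
    apply Hret. unfold in_open. lra.
Qed.

Lemma hull_onto_U0 y : a0 < y < b0 -> exists! x, ch < x < dh /\ g x = y.
Proof.
  intros Hy. destruct W_bounds as (_ & Hcd & _).
  assert (Hinj : forall z1 z2, ch <= z1 -> z1 < z2 -> z2 <= dh -> g z1 <> g z2)
    by (intros; apply (Derive_neq0_injective g ch dh);
        auto using iter_F_ex_derive, hull_Derive_neq0).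
  assert (Hends : g ch <> g dh) by (apply Hinj; lra).
  destruct (IVT_gen g ch dh y (iter_F_continuity n)) as [x [Hx Hgx]].
  { unfold Rmin, Rmax. destruct (Rle_dec (g ch) (g dh)); destruct hull_ends as [[H1|H1] [H2|H2]];
      rewrite ?H1, ?H2 in *; lra. }
  rewrite Rmin_left, Rmax_right in Hx by lra.
  assert (x <> ch) by (intros ->; destruct hull_ends as [[H1|H1] _]; lra).
  assert (x <> dh) by (intros ->; destruct hull_ends as [_ [H2|H2]]; lra).
  exists x. split; [split; [lra | exact Hgx]|].
  intros x' [Hx' Hgx'].
  destruct (Rtotal_order x' x) as [Hlt | [Heq | Hgt]]; [exfalso | symmetry; exact Heq | exfalso].
  - apply (Hinj x' x); lra.
  - apply (Hinj x x'); lra.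
Qed.

Lemma branch_expansion x : c < x < d ->
  Rmin (a1 - a0) (b0 - b1) <= Rabs (Derive g x) * (b1 - a1).
Proof.
  intros Hx.
  assert (Hgd := W_closure_maps_into_U1 d ltac:(lra)).
  assert (Hgc := W_closure_maps_into_U1 c ltac:(lra)).
  assert (Rmin (a1 - a0) (b0 - b1) <= a1 - a0) by apply Rmin_l.
  assert (Rmin (a1 - a0) (b0 - b1) <= b0 - b1) by apply Rmin_r.
  assert (Habs := Rabs_pos (Derive g x)).
  destruct (Rabs_Derive_min_principle g ch dh (iter_F_ex_derive n) hull_Derive_neq0)
    with (c := c) (x := x) (d := d) as [Hright|Hleft]; try lra.
  - intros y Hy. apply ex_derive_inv_sqrt_deriv_iter, hull_regular_orbit; auto.
  - intros y1 y2 Hy1 H12 Hy2. apply Derive_inv_sqrt_deriv_iter_nondecreasing; auto.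
    intros y Hy. apply hull_regular_orbit. lra.
  - assert (Rmin (a1 - a0) (b0 - b1) <= Rabs (g dh - g d)).
    { destruct hull_ends as [_ [H2|H2]]; rewrite H2;
        [rewrite Rabs_left1 | rewrite Rabs_right]; lra. }
    assert (Rabs (Derive g x) * (dh - d) <= Rabs (Derive g x) * (b1 - a1))
      by (apply Rmult_le_compat_l; lra).
    lra.
  - assert (Rmin (a1 - a0) (b0 - b1) <= Rabs (g c - g ch)).
    { destruct hull_ends as [[H1|H1] _]; rewrite H1;
        [rewrite Rabs_right | rewrite Rabs_left1]; lra. }
    assert (Rabs (Derive g x) * (c - ch) <= Rabs (Derive g x) * (b1 - a1))
      by (apply Rmult_le_compat_l; lra).
    lra.
Qed.

End Hull.

Theorem branch_pullback : exists ch dh,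
  a1 <= ch /\ ch <= c /\ d <= dh /\ dh <= b1 /\
  (forall x, in_open ch dh x -> in_open a0 b0 (g x)) /\
  (forall y, in_open a0 b0 y -> exists! x, in_open ch dh x /\ g x = y) /\
  (forall x, in_open ch dh x -> ex_derive g x /\ Derive g x <> 0) /\
  (forall (cc dc : R) (m : nat), is_branch F a1 b1 cc dc m -> central cc dc ->
     dh <= cc \/ dc <= ch) /\
  (forall x, in_open c d x -> Rmin (a1 - a0) (b0 - b1) <= Rabs (Derive g x) * (b1 - a1)).
Proof.
  destruct hull_exists as (ch & dh & Hlow & Hhigh & Hends & Hmaps).
  assert (Hbounds := conj Hlow Hhigh).
  exists ch, dh.
  split; [lra|]. split; [lra|]. split; [lra|]. split; [lra|].
  split; [exact Hmaps|].
  split; [exact (hull_onto_U0 ch dh Hbounds Hends Hmaps)|].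
  split; [intros x Hx; split;
          [apply iter_F_ex_derive | exact (hull_Derive_neq0 ch dh Hbounds Hends Hmaps x Hx)]|].
  split; [exact (hull_disjoint_central ch dh Hbounds Hends Hmaps)|].
  exact (branch_expansion ch dh Hbounds Hends Hmaps).
Qed.

End FirstReturnBranch.

Theorem mainTheorem11 (f : R -> R -> R) (eps : R) :
  MR_family f eps ->
  exists theta0 : R, theta0 > 0 /\
  forall theta : R, 0 < theta < theta0 ->
  exists t1 : R, t1 > 0 /\
  forall t : R, 0 <= t <= eps -> t <= t1 ->
  forall a0 b0 a1 b1 : R,
    (* 0 in U1 subset U0 subset (-theta, theta), U_j = (a_j, b_j) *)
    -theta <= a0 -> a0 <= a1 -> a1 < 0 -> 0 < b1 -> b1 <= b0 -> b0 <= theta ->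
    (* f_t(boundary U_j) is a single preperiodic point *)
    f t a0 = f t b0 -> preperiodic (f t) (f t a0) ->
    f t a1 = f t b1 -> preperiodic (f t) (f t a1) ->
    (* the forward orbits of the boundary points avoid U0 *)
    (forall x, (x = a0 \/ x = b0 \/ x = a1 \/ x = b1) ->
       forall k : nat, (k >= 1)%nat -> ~ in_open a0 b0 (iter k (f t) x)) ->
    (* |U1| <= theta * dist(U1, boundary U0) *)
    b1 - a1 <= theta * Rmin (a1 - a0) (b0 - b1) ->
    (* 0 never returns to U0, or its first return to U0 lies in U1 *)
    ((forall k : nat, (k >= 1)%nat -> ~ in_open a0 b0 (iter k (f t) 0)) \/
     (exists k : nat, (k >= 1)%nat /\ in_open a1 b1 (iter k (f t) 0) /\
        forall j : nat, (1 <= j < k)%nat -> ~ in_open a0 b0 (iter j (f t) 0))) ->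
  forall (c d : R) (n : nat),
    is_branch (f t) a1 b1 c d n -> ~ central c d ->
    exists ch dh : R,
      (* W subset hat W subset U1 *)
      a1 <= ch /\ ch <= c /\ d <= dh /\ dh <= b1 /\
      (* f_t^n maps hat W diffeomorphically onto U0 *)
      (forall x, in_open ch dh x -> in_open a0 b0 (iter n (f t) x)) /\
      (forall y, in_open a0 b0 y ->
         exists! x, in_open ch dh x /\ iter n (f t) x = y) /\
      (forall x, in_open ch dh x ->
         ex_derive (iter n (f t)) x /\ Derive (iter n (f t)) x <> 0) /\
      (* hat W is disjoint from the central branch, if any *)
      (forall (cc dc : R) (m : nat), is_branch (f t) a1 b1 cc dc m -> central cc dc ->
         dh <= cc \/ dc <= ch) /\
      (* |D phi_1| >= 5 on (the non-central branch) W *)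
      (forall x, in_open c d x -> Rabs (Derive (iter n (f t)) x) >= 5).
Proof.
  intros (_ & _ & Hfamily & _). exists (1 / 5). split; [lra|].
  intros theta Htheta. exists 1. split; [lra|].
  intros t Ht _ a0 b0 a1 b1 Ha0 Ha01 Ha1 Hb1 Hb10 Hb0 _ _ _ _ Hbd Hsmall Hcrit c d n Hbr Hnc.
  destruct (Hfamily t Ht) as [HS _].
  set (M := Rmin (a1 - a0) (b0 - b1)) in *.
  assert (HM : 0 < M) by (apply Rnot_le_lt; intro; nra).
  assert (M <= a1 - a0) by apply Rmin_l. assert (M <= b0 - b1) by apply Rmin_r.
  destruct (branch_pullback (f t) HS a0 b0 a1 b1 ltac:(lra) ltac:(lra) ltac:(lra)
              Hbd Hcrit c d n Hbr Hnc)
    as (ch & dh & Hch & Hchc & Hddh & Hdh & Hmaps & Honto & Hdiffeo & Hcentral & Hexp).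
  exists ch, dh. do 8 (split; [assumption|]).
  intros x Hx. specialize (Hexp x Hx). fold M in Hexp.
  assert (Habs := Rabs_pos (Derive (iter n (f t)) x)).
  assert (M <= Rabs (Derive (iter n (f t)) x) * (theta * M)).
  { eapply Rle_trans; [exact Hexp|]. apply Rmult_le_compat_l; lra. }
  nra.
Qed.
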